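(* Let $1<\beta\le2$ and let $x\in(0,1)$ be non-simple. (1) For every $y\in(0,1)$ with $y<x$, writing $N=N(x,y)$, we have $x-y\ge \tau_\beta^N(x)/\beta^N$. (2) For every $z\in(0,1)$ with $z>x$, writing $N=N(x,z)$, we have $z-x\ge (1-\tau_\beta^N(x))/\beta^N$.
   Context: Fix $1<\beta\le 2$. The beta-map is $\tau_\beta(x)=\beta x-[\beta x]$ on $[0,1]$, where $[y]$ is the integer part of $y$. The digits are $g_n(x)=[\beta\,\tau_\beta^{n-1}(x)]\in\{0,1\}$ for $n\ge1$ and $x\in[0,1)$, so that $x=\sum_{n\ge1}g_n(x)\beta^{-n}$. A number $x\in[0,1]$ is called simple if $\tau_\beta^{n}(x)=1/\beta$ for some $n\ge0$. For $x\ne y$ in $[0,1]$, the orbit separation time is $N(x,y)=\min\{i\ge1:\ g_i(x)\neq g_i(y)\}$. *)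

From Stdlib Require Import Reals Lra.
Open Scope R_scope.

(* integer part [y] (floor); Stdlib's Int_part y = up y - 1 is the floor *)
Definition ipart (y : R) : R := IZR (Int_part y).

Definition tau (beta x : R) : R := beta * x - ipart (beta * x).

Fixpoint tau_iter (beta : R) (n : nat) (x : R) : R :=
  match n with
  | O => x
  | S m => tau beta (tau_iter beta m x)
  end.

Definition digit (beta : R) (n : nat) (x : R) : R :=
  ipart (beta * tau_iter beta (n - 1) x).

Definition simple (beta x : R) : Prop :=
  exists n : nat, tau_iter beta n x = / beta.

Definition is_sep_time (beta x y : R) (N : nat) : Prop :=
  (1 <= N)%nat /\ digit beta N x <> digit beta N y /\
  (forall i : nat, (1 <= i < N)%nat -> digit beta i x = digit beta i y).

(* While the first N-1 digits of two points agree, each application of tau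
   multiplies their distance by beta, so x - y = (u - v) / beta^(N-1) with
   u, v the (N-1)-st iterates.  At the separating digit, [beta u] exceeds
   [beta v] by at least one, which forces beta (u - v) >= tau u and
   beta (u - v) >= 1 - tau v. *)

From Stdlib Require Import Reals Lra Lia ZArith.
Open Scope R_scope.

Lemma ipart_le (r : R) : ipart r <= r.
Proof. unfold ipart. destruct (base_Int_part r). lra. Qed.

Lemma lt_ipart_succ (r : R) : r < ipart r + 1.
Proof. unfold ipart. destruct (base_Int_part r). lra. Qed.

Lemma ipart_succ_le (a b : R) :
  a < b -> ipart a <> ipart b -> ipart a + 1 <= ipart b.
Proof.
  intros Hab Hne.
  assert (Hlt : (Int_part a < Int_part b + 1)%Z).
  { apply lt_IZR. rewrite plus_IZR.
    pose proof (ipart_le a). pose proof (lt_ipart_succ b).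
    unfold ipart in *. simpl. lra. }
  assert (Hneq : Int_part a <> Int_part b) by (intros E; apply Hne; unfold ipart; now rewrite E).
  assert (Hz : (Int_part a + 1 <= Int_part b)%Z) by lia.
  apply IZR_le in Hz. rewrite plus_IZR in Hz. unfold ipart. simpl in Hz. lra.
Qed.

Lemma tau_gap (beta u v : R) :
  0 < beta -> v < u -> ipart (beta * u) <> ipart (beta * v) ->
  tau beta u <= beta * (u - v) /\ 1 - tau beta v <= beta * (u - v).
Proof.
  intros Hb Hvu Hne.
  assert (Hsucc : ipart (beta * v) + 1 <= ipart (beta * u))
    by (apply ipart_succ_le; [nra | now apply not_eq_sym]).
  pose proof (ipart_le (beta * u)). pose proof (lt_ipart_succ (beta * v)).
  unfold tau. rewrite Rmult_minus_distr_l. split; lra.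
Qed.

Lemma sub_eq_tau_iter_sub (beta x y : R) (M : nat) : beta <> 0 ->
  (forall i : nat, (1 <= i <= M)%nat -> digit beta i x = digit beta i y) ->
  x - y = (tau_iter beta M x - tau_iter beta M y) / beta ^ M.
Proof.
  intros Hb Hdig. induction M as [|M IH].
  - simpl. field.
  - assert (Hd : digit beta (S M) x = digit beta (S M) y) by (apply Hdig; lia).
    unfold digit in Hd. replace (S M - 1)%nat with M in Hd by lia.
    rewrite IH by (intros; apply Hdig; lia).
    simpl tau_iter. unfold tau. rewrite Hd. simpl pow.
    assert (beta ^ M <> 0) by now apply pow_nonzero.
    field. auto.
Qed.

Lemma is_sep_time_sym (beta x y : R) (N : nat) :
  is_sep_time beta x y N -> is_sep_time beta y x N.
Proof.
  intros (HN & Hne & Hdig). repeat split; auto.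
  intros i Hi. symmetry. auto.
Qed.

Lemma sep_time_gap (beta x y : R) (N : nat) :
  0 < beta -> y < x -> is_sep_time beta x y N ->
  tau_iter beta N x / beta ^ N <= x - y /\
  (1 - tau_iter beta N y) / beta ^ N <= x - y.
Proof.
  intros Hb Hyx (HN & Hne & Hdig).
  destruct N as [|M]; [lia |].
  set (u := tau_iter beta M x). set (v := tau_iter beta M y).
  assert (HbM : 0 < beta ^ M) by now apply pow_lt.
  assert (Hdiff : x - y = (u - v) / beta ^ M).
  { apply sub_eq_tau_iter_sub; [lra |]. intros i Hi. apply Hdig. lia. }
  assert (Hvu : v < u).
  { assert (Huv : u - v = (x - y) * beta ^ M) by (rewrite Hdiff; field; lra). nra. }
  unfold digit in Hne. replace (S M - 1)%nat with M in Hne by lia.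
  destruct (tau_gap beta u v Hb Hvu Hne) as [Hx Hy].
  assert (Hscale : forall t, t <= beta * (u - v) -> t / beta ^ S M <= x - y).
  { intros t Ht. rewrite Hdiff. simpl pow.
    apply (Rmult_le_reg_r (beta * beta ^ M)); [nra |].
    field_simplify; lra. }
  split; apply Hscale; assumption.
Qed.

Theorem lemma2 (beta x : R) :
  1 < beta <= 2 -> 0 < x < 1 -> ~ simple beta x ->
  (forall (y : R) (N : nat), 0 < y < 1 -> y < x -> is_sep_time beta x y N ->
     x - y >= tau_iter beta N x / beta ^ N) /\
  (forall (z : R) (N : nat), 0 < z < 1 -> z > x -> is_sep_time beta x z N ->
     z - x >= (1 - tau_iter beta N x) / beta ^ N).
Proof.
  intros Hb _ _. split.
  - intros y N _ Hyx Hsep.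
    apply Rle_ge, (sep_time_gap beta x y N); [lra | assumption | assumption].
  - intros z N _ Hxz Hsep.
    apply Rle_ge, (sep_time_gap beta z x N); [lra | assumption |].
    now apply is_sep_time_sym.
Qed.
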